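(* Let $\varphi_1,\dots,\varphi_m: L\to L'$ and $\psi_1,\dots,\psi_m: N\to N'$ be simplicial maps between simplicial complexes. Assume $\beta: N\to L$ and $\alpha: L'\to N'$ are strong equivalences and that $\alpha\circ\varphi_i\circ\beta\sim\psi_i$ for all $i=1,\dots,m$. Then $\mathrm{SD}(\varphi_1,\dots,\varphi_m)=\mathrm{SD}(\psi_1,\dots,\psi_m)$.
   Context: Simplicial maps $f,g: K\to K'$ are contiguous if $f(\sigma)\cup g(\sigma)$ is a simplex for every simplex $\sigma$ of $K$; $f\sim g$ (same contiguity class) if they are joined by a finite chain of simplicial maps with consecutive ones contiguous. A simplicial map $f: K\to K'$ is a strong equivalence if there is a simplicial map $g: K'\to K$ with $f\circ g\sim 1_{K'}$ and $g\circ f\sim 1_K$. For simplicial maps $\varphi_1,\dots,\varphi_m: K\to K'$, $\mathrm{SD}(\varphi_1,\dots,\varphi_m)$ is the least $n\ge0$ such that $K$ is a union of subcomplexes $K_0,\dots,K_n$ with $\varphi_i|_{K_k}\sim\varphi_j|_{K_k}$ for all $i,j,k$. *)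

From Stdlib Require Import Relations ClassicalEpsilon.
From mathcomp Require Import all_boot.
Set Implicit Arguments. Unset Strict Implicit. Unset Printing Implicit Defensive.

Definition is_complex (V : finType) (K : {set {set V}}) : bool :=
  (set0 \notin K) &&
  [forall s in K, forall t : {set V}, ((t \subset s) && (t != set0)) ==> (t \in K)].

Definition is_subcomplex (V : finType) (A K : {set {set V}}) : bool :=
  is_complex A && (A \subset K).

Definition simplicial (V W : finType) (K : {set {set V}}) (K' : {set {set W}})
  (f : V -> W) : Prop := forall s, s \in K -> f @: s \in K'.

Definition contiguous (V W : finType) (K : {set {set V}}) (K' : {set {set W}})
  (f g : V -> W) : Prop := forall s, s \in K -> (f @: s) :|: (g @: s) \in K'.

Definition contig_step (V W : finType) (K : {set {set V}}) (K' : {set {set W}})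
  (f g : V -> W) : Prop :=
  [/\ simplicial K K' f, simplicial K K' g & contiguous K K' f g].

Definition contig_class (V W : finType) (K : {set {set V}}) (K' : {set {set W}})
  (f g : V -> W) : Prop :=
  [/\ simplicial K K' f, simplicial K K' g &
      clos_refl_trans (V -> W) (contig_step K K') f g].

Definition strong_equiv (V W : finType) (K : {set {set V}}) (K' : {set {set W}})
  (f : V -> W) : Prop :=
  simplicial K K' f /\
  exists g : W -> V, [/\ simplicial K' K g,
     contig_class K' K' (f \o g) id & contig_class K K (g \o f) id].

Definition SD_le (V W : finType) (K : {set {set V}}) (K' : {set {set W}})
  (m : nat) (phi : 'I_m -> V -> W) (n : nat) : Prop :=
  exists Ks : 'I_n.+1 -> {set {set V}},
    [/\ forall k, is_subcomplex (Ks k) K,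
        \bigcup_(k < n.+1) Ks k = K &
        forall i j k, contig_class (Ks k) K' (phi i) (phi j)].

Definition SD_leb (V W : finType) (K : {set {set V}}) (K' : {set {set W}})
  (m : nat) (phi : 'I_m -> V -> W) (n : nat) : bool :=
  if excluded_middle_informative (SD_le K K' phi n) then true else false.

(* SD(phi_1,...,phi_m) as an element of nat ∪ {∞}: Some n = least such n,
   None = no such covering exists (SD = ∞). *)
Definition SD (V W : finType) (K : {set {set V}}) (K' : {set {set W}})
  (m : nat) (phi : 'I_m -> V -> W) : option nat :=
  match excluded_middle_informative (exists n, SD_leb K K' phi n) with
  | left ex => Some (ex_minn ex)
  | right _ => None
  end.

From Stdlib Require Import Relations ClassicalEpsilon.
From mathcomp Require Import all_boot.
Set Implicit Arguments. Unset Strict Implicit. Unset Printing Implicit Defensive.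

(* SD can only decrease when every phi_i is replaced by g \o phi_i \o f for
   simplicial maps f, g (pull the covering back along f), and it does not
   change when every phi_i is replaced by a map in its contiguity class
   (restrict the contiguity chains to each piece of the covering).  If gamma
   and delta are contiguity inverses of beta and alpha, then psi_i is in the
   class of alpha \o phi_i \o beta and phi_i in the class of
   delta \o psi_i \o gamma, so each SD bounds the other. *)

Lemma complex_face (V : finType) (K : {set {set V}}) (s t : {set V}) :
  is_complex K -> s \in K -> t \subset s -> t != set0 -> t \in K.
Proof.
case/andP=> _ /forall_inP closedK Ks ts t0.
by move/forallP: (closedK s Ks) => /(_ t) /implyP; apply; rewrite ts t0.
Qed.

Section ContiguityClass.

Variables (V W : finType) (K : {set {set V}}) (K' : {set {set W}}).

Lemma contig_class_sym (f g : V -> W) :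
  contig_class K K' f g -> contig_class K K' g f.
Proof.
case=> sf sg fg; split=> //.
elim: fg {sf sg} => [a b [sa sb ab] | a | a b c _ ba _ cb].
- by apply: rt_step; split=> // s Ks; rewrite setUC; apply: ab.
- exact: rt_refl.
- exact: rt_trans cb ba.
Qed.

Lemma contig_class_trans (f g h : V -> W) :
  contig_class K K' f g -> contig_class K K' g h -> contig_class K K' f h.
Proof. by case=> sf _ fg [_ sh gh]; split=> //; apply: rt_trans fg gh. Qed.

End ContiguityClass.

Lemma simplicial_comp (U V W : finType) (K0 : {set {set U}})
    (K : {set {set V}}) (K' : {set {set W}}) (h : U -> V) (f : V -> W) :
  simplicial K0 K h -> simplicial K K' f -> simplicial K0 K' (f \o h).
Proof. by move=> sh sf s K0s; rewrite imset_comp; apply/sf/sh. Qed.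

Lemma simplicial_id (V : finType) (A K : {set {set V}}) :
  A \subset K -> simplicial A K id.
Proof. by move=> AK s As; rewrite imset_id; apply: (subsetP AK). Qed.

Lemma contig_class_comp (U V W X : finType) (K0 : {set {set U}})
    (K : {set {set V}}) (K' : {set {set W}}) (K'' : {set {set X}})
    (h : U -> V) (g : W -> X) (f f' : V -> W) :
  simplicial K0 K h -> simplicial K' K'' g -> contig_class K K' f f' ->
  contig_class K0 K'' (g \o f \o h) (g \o f' \o h).
Proof.
move=> sh sg [sf sf' ff'].
have sghf a : simplicial K K' a -> simplicial K0 K'' (g \o a \o h).
  by move=> sa; apply: simplicial_comp sh (simplicial_comp sa sg).
split; [exact: sghf | exact: sghf |].
elim: ff' {sf sf'} => [a b [sa sb ab] | a | a b c _ ab _ bc].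
- apply: rt_step; split; [exact: sghf | exact: sghf |].
  move=> s K0s; rewrite (imset_comp (g \o a) h) (imset_comp (g \o b) h).
  by rewrite (imset_comp g a) (imset_comp g b) -imsetU; apply/sg/ab/sh.
- exact: rt_refl.
- exact: rt_trans ab bc.
Qed.

Lemma contig_class_sub (V W : finType) (A K : {set {set V}})
    (K' : {set {set W}}) (f g : V -> W) :
  A \subset K -> contig_class K K' f g -> contig_class A K' f g.
Proof.
move=> AK fg.
exact: contig_class_comp (simplicial_id AK) (simplicial_id (subxx K')) fg.
Qed.

Definition preim_complex (V1 V2 : finType) (f : V2 -> V1)
    (A : {set {set V1}}) (K2 : {set {set V2}}) : {set {set V2}} :=
  [set s in K2 | f @: s \in A].

Lemma preim_complex_sub (V1 V2 : finType) (f : V2 -> V1)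
    (A : {set {set V1}}) (K2 : {set {set V2}}) :
  preim_complex f A K2 \subset K2.
Proof. by apply/subsetP=> s; rewrite inE => /andP[]. Qed.

Lemma simplicial_preim_complex (V1 V2 : finType) (f : V2 -> V1)
    (A : {set {set V1}}) (K2 : {set {set V2}}) :
  simplicial (preim_complex f A K2) A f.
Proof. by move=> s; rewrite inE => /andP[]. Qed.

Lemma preim_subcomplex (V1 V2 : finType) (f : V2 -> V1)
    (A : {set {set V1}}) (K2 : {set {set V2}}) :
  is_complex K2 -> is_complex A -> is_subcomplex (preim_complex f A K2) K2.
Proof.
move=> cK2 cA; rewrite /is_subcomplex preim_complex_sub andbT.
apply/andP; split.
  by rewrite inE imset0 negb_and; case/andP: cA => -> _; rewrite orbT.
apply/forall_inP=> s; rewrite inE => /andP[K2s Afs].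
apply/forallP=> t; apply/implyP=> /andP[ts t0].
rewrite inE (complex_face cK2 K2s ts t0) /=.
by apply: (complex_face cA Afs); rewrite ?imsetS ?imset_eq0.
Qed.

Lemma bigcup_preim_complex (V1 V2 : finType) (K1 : {set {set V1}})
    (K2 : {set {set V2}}) (f : V2 -> V1) n (Ks : 'I_n -> {set {set V1}}) :
  simplicial K2 K1 f -> \bigcup_(k < n) Ks k = K1 ->
  \bigcup_(k < n) preim_complex f (Ks k) K2 = K2.
Proof.
move=> sf coverK1; apply/setP=> s; apply/bigcupP/idP.
  by case=> k _; rewrite inE => /andP[].
move=> K2s; have := sf s K2s; rewrite -coverK1 => /bigcupP[k _ Kks].
by exists k => //; rewrite inE K2s.
Qed.

Lemma SD_le_comp (V1 W1 V2 W2 : finType) (K1 : {set {set V1}})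
    (K1' : {set {set W1}}) (K2 : {set {set V2}}) (K2' : {set {set W2}})
    m (phi : 'I_m -> V1 -> W1) (f : V2 -> V1) (g : W1 -> W2) n :
  is_complex K2 -> simplicial K2 K1 f -> simplicial K1' K2' g ->
  SD_le K1 K1' phi n -> SD_le K2 K2' (fun i => g \o phi i \o f) n.
Proof.
move=> cK2 sf sg [Ks [subKs coverK1 phiKs]].
exists (fun k => preim_complex f (Ks k) K2); split.
- by move=> k; case/andP: (subKs k) => cKk _; apply: preim_subcomplex.
- exact: bigcup_preim_complex sf coverK1.
- move=> i j k /=.
  exact: contig_class_comp (simplicial_preim_complex (K2 := K2)) sg (phiKs i j k).
Qed.

Lemma SD_le_contig (V W : finType) (K : {set {set V}}) (K' : {set {set W}})
    m (phi phi' : 'I_m -> V -> W) n :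
  (forall i, contig_class K K' (phi i) (phi' i)) ->
  SD_le K K' phi n -> SD_le K K' phi' n.
Proof.
move=> phiphi' [Ks [subKs coverK phiKs]]; exists Ks; split=> // i j k.
have KkK : Ks k \subset K by case/andP: (subKs k).
apply: contig_class_trans (contig_class_sub KkK (phiphi' j)).
apply: contig_class_trans (phiKs i j k).
exact/contig_class_sub/contig_class_sym/phiphi'.
Qed.

Lemma eq_SD (V W V2 W2 : finType) (K : {set {set V}}) (K' : {set {set W}})
    (K2 : {set {set V2}}) (K2' : {set {set W2}}) m (phi : 'I_m -> V -> W)
    (psi : 'I_m -> V2 -> W2) :
  (forall n, SD_le K K' phi n <-> SD_le K2 K2' psi n) ->
  SD K K' phi = SD K2 K2' psi.
Proof.
move=> eqSD_le.
have eqSD_leb n : SD_leb K K' phi n = SD_leb K2 K2' psi n.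
  rewrite /SD_leb; case: excluded_middle_informative => [a|na];
    case: excluded_middle_informative => [b|nb] //.
  - by case: nb; apply/eqSD_le.
  - by case: na; apply/eqSD_le.
rewrite /SD; case: excluded_middle_informative => [a|na];
  case: excluded_middle_informative => [b|nb].
- congr Some; case: ex_minnP => x px minx; case: ex_minnP => y py miny.
  by apply/eqP; rewrite eqn_leq minx ?eqSD_leb // miny // -eqSD_leb.
- by case: nb; case: a => n; rewrite eqSD_leb; exists n.
- by case: na; case: b => n; rewrite -eqSD_leb; exists n.
- by [].
Qed.

Lemma contig_class_conj_inv (VL VL' VN VN' : finType) (L : {set {set VL}})
    (L' : {set {set VL'}}) (N : {set {set VN}}) (N' : {set {set VN'}})
    (phi : VL -> VL') (psi : VN -> VN') (beta : VN -> VL) (gamma : VL -> VN)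
    (alpha : VL' -> VN') (delta : VN' -> VL') :
  simplicial L L' phi -> simplicial L' N' alpha -> simplicial N' L' delta ->
  simplicial L N gamma ->
  contig_class L L (beta \o gamma) id -> contig_class L' L' (delta \o alpha) id ->
  contig_class N N' (alpha \o phi \o beta) psi ->
  contig_class L L' (delta \o psi \o gamma) phi.
Proof.
move=> sphi salpha sdelta sgamma betagamma deltaalpha conj.
have sL := simplicial_id (subxx L); have sL' := simplicial_id (subxx L').
have phi_daphi := contig_class_sym (contig_class_comp sphi sL' deltaalpha).
have daphi_dapbg := contig_class_sym (contig_class_comp sL
  (simplicial_comp (simplicial_comp sphi salpha) sdelta) betagamma).
have dapbg_dpsig := contig_class_comp sgamma sdelta conj.
apply/contig_class_sym/(contig_class_trans phi_daphi).
exact: contig_class_trans daphi_dapbg dapbg_dpsig.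
Qed.

Theorem corollary3p8
  (VL VL' VN VN' : finType)
  (L : {set {set VL}}) (L' : {set {set VL'}})
  (N : {set {set VN}}) (N' : {set {set VN'}})
  (cL : is_complex L) (cL' : is_complex L')
  (cN : is_complex N) (cN' : is_complex N')
  (m : nat) (phi : 'I_m -> VL -> VL') (psi : 'I_m -> VN -> VN')
  (hphi : forall i, simplicial L L' (phi i))
  (hpsi : forall i, simplicial N N' (psi i))
  (beta : VN -> VL) (alpha : VL' -> VN')
  (hbeta : strong_equiv N L beta) (halpha : strong_equiv L' N' alpha)
  (hcomp : forall i, contig_class N N' (alpha \o phi i \o beta) (psi i)) :
  SD L L' phi = SD N N' psi.
Proof.
case: hbeta => sbeta [gamma [sgamma betagamma _]].
case: halpha => salpha [delta [sdelta _ deltaalpha]].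
apply: eq_SD => n; split => [SDphi | SDpsi].
- exact: SD_le_contig hcomp (SD_le_comp cN sbeta salpha SDphi).
- apply: SD_le_contig (SD_le_comp cL sgamma sdelta SDpsi) => i.
  exact: contig_class_conj_inv (hphi i) salpha sdelta sgamma betagamma
    deltaalpha (hcomp i).
Qed.
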